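(* Let $I,J\in\mathbb{I}_{m,n}$ and suppose $I^{cc}_0\subseteq J_0$. Then $I\le J$.
   Context: For integers $m,n\ge1$, $G_{m,n}$ is the equioriented commutative $m\times n$ grid: the quiver with vertex set $\{(i,j):1\le i\le m,\ 1\le j\le n\}$ and arrows $(i,j)\to(i,j+1)$ and $(i,j)\to(i+1,j)$, bound by all commutativity relations. An interval of $G_{m,n}$ is a nonempty full subquiver $I$ which is connected (as an undirected graph) and convex (whenever $x,y\in I_0$ and there are paths $x\to z$ and $z\to y$ in $G_{m,n}$, then $z\in I_0$); $I_0$ denotes its vertex set. $\mathbb{I}_{m,n}$ is the set of intervals, partially ordered by $I\le J\iff I_0\subseteq J_0$. For $I\in\mathbb{I}_{m,n}$, $I^{ss}_0$ is the set of vertices of $I$ that are sources or sinks of the quiver $I$, and $I^{cc}_0=I_0\cap(\mathrm{pr}_1(I^{ss}_0)\times\mathrm{pr}_2(I^{ss}_0))$, where $\mathrm{pr}_1,\mathrm{pr}_2$ are the projections to the first and second coordinates. *)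

From mathcomp Require Import all_boot.
Set Implicit Arguments. Unset Strict Implicit. Unset Printing Implicit Defensive.

(* Vertices of the m x n grid G_{m,n}: vertex (i,j) with 1<=i<=m, 1<=j<=n
   is represented 0-indexed by (i-1, j-1) : 'I_m * 'I_n. *)
Definition gvert (m n : nat) := ('I_m * 'I_n)%type.

Definition garrow (m n : nat) (x y : gvert m n) : bool :=
  ((val x.1 == val y.1) && (val y.2 == (val x.2).+1)) ||
  ((val x.2 == val y.2) && (val y.1 == (val x.1).+1)).

Definition gpath (m n : nat) (x y : gvert m n) : bool :=
  connect (@garrow m n) x y.

Definition adjIn (m n : nat) (I : {set gvert m n}) : rel (gvert m n) :=
  fun x y => [&& x \in I, y \in I & garrow x y || garrow y x].

Definition connectedSub (m n : nat) (I : {set gvert m n}) : bool :=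
  [forall x in I, forall y in I, connect (adjIn I) x y].

Definition convexSub (m n : nat) (I : {set gvert m n}) : bool :=
  [forall x in I, forall y in I, forall z,
     (gpath x z && gpath z y) ==> (z \in I)].

Definition is_interval (m n : nat) (I : {set gvert m n}) : bool :=
  [&& I != set0, connectedSub I & convexSub I].

Definition is_source (m n : nat) (I : {set gvert m n}) (x : gvert m n) : bool :=
  (x \in I) && [forall y in I, ~~ garrow y x].
Definition is_sink (m n : nat) (I : {set gvert m n}) (x : gvert m n) : bool :=
  (x \in I) && [forall y in I, ~~ garrow x y].

Definition ssSet (m n : nat) (I : {set gvert m n}) : {set gvert m n} :=
  [set x in I | is_source I x || is_sink I x].

(* I^cc_0 = I_0 ∩ (pr1(I^ss_0) × pr2(I^ss_0)) *)
Definition ccSet (m n : nat) (I : {set gvert m n}) : {set gvert m n} :=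
  [set x in I | [exists a in ssSet I, a.1 == x.1] &&
                [exists b in ssSet I, b.2 == x.2]].

(* Every vertex x of I lies on a path from a source of I to a sink of I:
   walk backwards (resp. forwards) inside I while some arrow is available,
   which terminates because arrows raise the weight i + j by one. Sources and
   sinks of I belong to I^cc, hence to J, and convexity of J puts x in J. *)

From mathcomp Require Import all_boot.
From mathcomp Require Import zify.

Set Implicit Arguments.
Unset Strict Implicit.
Unset Printing Implicit Defensive.

Section ExtremalConnect.

Variables (T : finType) (e : rel T) (r : T -> nat).
Hypothesis rank_lt : forall {u v}, e u v -> r u < r v.

Lemma minimal_connect (A : {set T}) x :
  x \in A -> exists2 s, s \in A & [forall y in A, ~~ e y s] && connect e s x.
Proof.
have [k] := ubnP (r x); elim: k x => // k IHk x rx xA.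
case: (boolP [forall y in A, ~~ e y x]) => [min_x | ].
  by exists x; rewrite // min_x connect0.
rewrite negb_forall_in => /existsP [y /andP [yA]]; rewrite negbK => eyx.
have [s sA /andP [min_s csy]] := IHk y (leq_trans (rank_lt eyx) rx) yA.
by exists s; rewrite // min_s (connect_trans csy (connect1 eyx)).
Qed.

End ExtremalConnect.

Section GridExtremal.

Variables (m n : nat) (I : {set gvert m n}).

Definition weight (x : gvert m n) : nat := val x.1 + val x.2.

Lemma garrow_weight x y : garrow x y -> weight y = (weight x).+1.
Proof. by rewrite /garrow /weight => /orP [] /andP [/eqP h1 /eqP h2]; lia. Qed.

Lemma weight_lt x : weight x < m + n.
Proof.
by rewrite /weight -addSn; apply: leq_add; [exact: ltn_ord | exact/ltnW/ltn_ord].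
Qed.

Lemma garrow_weight_lt x y : garrow x y -> weight x < weight y.
Proof. by move/garrow_weight->. Qed.

Lemma garrow_coweight_lt x y : garrow y x -> m + n - weight x < m + n - weight y.
Proof. by move/garrow_weight=> wx; have := weight_lt x; lia. Qed.

Lemma source_below x : x \in I -> exists2 s, is_source I s & gpath s x.
Proof.
move=> xI; have [s sI /andP [min_s gsx]] := minimal_connect garrow_weight_lt xI.
by exists s; rewrite /is_source ?sI.
Qed.

Lemma sink_above x : x \in I -> exists2 t, is_sink I t & gpath x t.
Proof.
move=> xI; have [t tI /andP [max_t gtx]] := minimal_connect garrow_coweight_lt xI.
by exists t; rewrite /is_sink ?tI //; move: gtx; rewrite connect_rev.
Qed.

Lemma ssSet_sub_ccSet : ssSet I \subset ccSet I.
Proof.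
apply/subsetP => x xss; have := xss; rewrite !inE => /andP [xI _].
by rewrite xI /=; apply/andP; split; apply/existsP; exists x; rewrite xss eqxx.
Qed.

End GridExtremal.

Lemma mem_convexSub (m n : nat) (J : {set gvert m n}) x y z :
  convexSub J -> x \in J -> y \in J -> gpath x z -> gpath z y -> z \in J.
Proof.
move=> convJ xJ yJ gxz gzy.
move/forallP/(_ x)/implyP/(_ xJ)/forallP/(_ y)/implyP/(_ yJ): convJ.
by move/forallP/(_ z)/implyP; apply; rewrite gxz gzy.
Qed.

Theorem mainTheorem6 (m n : nat) (hm : 0 < m) (hn : 0 < n)
    (I J : {set gvert m n}) :
  is_interval I -> is_interval J -> ccSet I \subset J -> I \subset J.
Proof.
move=> _ /and3P [_ _ convJ] ccIJ; apply/subsetP => x xI.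
have ssIJ := subset_trans (ssSet_sub_ccSet I) ccIJ.
have [s src_s gsx] := source_below xI.
have [t snk_t gxt] := sink_above xI.
have sJ : s \in J by apply: (subsetP ssIJ); rewrite inE src_s andbT; case/andP: src_s.
have tJ : t \in J by apply: (subsetP ssIJ); rewrite inE snk_t orbT andbT; case/andP: snk_t.
exact: mem_convexSub convJ sJ tJ gsx gxt.
Qed.
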